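(* Let $G$ be an $X-Y$ normalized graph. Each sequence $(S_1,\dots,S_r)$ of pairwise disjoint non-empty subsets of $V(G)$ is the attribute of at most one compound witness (with respect to $X$ and $Y$ in $G$).
   Context: $G$ is a finite undirected graph, $X,Y$ disjoint subsets of $V(G)$; $N(C)=(\bigcup_{v\in C}N(v))\setminus C$. An $X-Y$ separator is a set $K \subseteq V(G) \setminus (X \cup Y)$ such that $G \setminus K$ has no path from $X$ to $Y$; minimal means inclusion-minimal. A graph $H$ is $X-Y$ normalized if $N(X)$ is the only minimum-cardinality $X-Y$ separator of $H$. In $H$, let $r_H$ be the minimum size of an $X-Y$ separator; the excess of an $X-Y$ separator $K$ is $|K|-r_H$. $NR(H,Y,K)$ is the set of vertices not reachable from $Y$ in $H\setminus K$; $K \geq K'$ means $NR(H,Y,K)\supseteq NR(H,Y,K')$, $K'<K$ means $K\ge K'$ and the $NR$ sets differ. A minimal $X-Y$ separator $K$ is important if there is no $X-Y$ separator $K'$ with $K<K'$ and $|K|\ge |K'|$. For $S\subseteq N(X)$ with no vertex adjacent to $Y$, the cover excess $CE(S)$ is the excess of a smallest $X-Y$ separator disjoint from $S$; a witness of $S$ is an $X-Y$ separator disjoint from $S$ with excess $CE(S)$; in a normalized graph there is a unique witness of $S$ that is an important $X-Y$ separator, denoted $K(S)$. $Pr(H,X,Y,K)$ is the graph obtained from $H\setminus (NR(H,Y,K)\setminus X)$ by making $X$ adjacent to all vertices of $K$ (for $K$ important, it is $X-Y$ normalized). Compound witness: for an $X-Y$ normalized graph $H$, a sequence $(S_1,\dots,S_r)$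 of pairwise disjoint non-empty vertex sets and an $X-Y$ separator $K$, $K$ is a compound witness of the attribute $(S_1,\dots,S_r)$ w.r.t. $X,Y$ in $H$ if: when $r=1$, $S_1\subseteq N(X)$ and $K=K(S_1)$; when $r>1$, $K(S_1)$ is defined (i.e. $S_1\subseteq N(X)$, not adjacent to $Y$), $S_2\cup\dots\cup S_r$ is disjoint from $N(X)$, and $K$ is a compound witness of $(S_2,\dots,S_r)$ w.r.t. $X,Y$ in $Pr(H,X,Y,K(S_1))$. The rank of $K$ is $|S_1|+\dots+|S_r|$. *)

From mathcomp Require Import all_boot.
Set Implicit Arguments. Unset Strict Implicit. Unset Printing Implicit Defensive.

(* A finite undirected graph on (a subset of) a finite type V:
   vertex set [verts] and an arbitrary relation [adj]; the actual edge
   relation [edge] is the symmetrization of [adj], restricted to [verts],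
   without loops. *)
Record graph (V : finType) := Graph { verts : {set V}; adj : rel V }.

Section Defs.
Variable V : finType.
Implicit Types (g : graph V) (X Y K S C : {set V}).

Definition edge g : rel V := fun u v =>
  [&& u \in verts g, v \in verts g, u != v & adj g u v || adj g v u].

Definition Nbr g C : {set V} :=
  [set u | (u \notin C) && [exists v in C, edge g v u]].

Definition edge_minus g K : rel V := fun u v =>
  [&& edge g u v, u \notin K & v \notin K].

Definition has_path g K X Y : bool :=
  [exists x in X, exists y in Y,
     [&& x \notin K, y \notin K & connect (edge_minus g K) x y]].

Definition separator g X Y K : Prop :=
  K \subset verts g :\: (X :|: Y) /\ ~~ has_path g K X Y.

Definition minimal_separator g X Y K : Prop :=
  separator g X Y K /\ forall K', K' \proper K -> ~ separator g X Y K'.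

Definition minimum_separator g X Y K : Prop :=
  separator g X Y K /\ forall K', separator g X Y K' -> #|K| <= #|K'|.

Definition normalized g X Y : Prop :=
  forall K, minimum_separator g X Y K <-> K = Nbr g X.

Definition NR g Y K : {set V} :=
  [set v in verts g :\: K |
     ~~ [exists y in Y, (y \notin K) && connect (edge_minus g K) y v]].

Definition sep_ge g Y K K' : Prop := NR g Y K' \subset NR g Y K.
Definition sep_lt g Y K' K : Prop := sep_ge g Y K K' /\ NR g Y K != NR g Y K'.

Definition important g X Y K : Prop :=
  minimal_separator g X Y K /\
  ~ exists K', [/\ separator g X Y K', sep_lt g Y K K' & #|K'| <= #|K|].

(* witness of S: a separator disjoint from S of minimum excess among
   separators disjoint from S (excess = |K| - r_g, r_g a constant, so this
   is minimum cardinality among separators disjoint from S) *)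
Definition witness g X Y S K : Prop :=
  [/\ separator g X Y K, [disjoint K & S] &
      forall K', separator g X Y K' -> [disjoint K' & S] -> #|K| <= #|K'|].

Definition isKS g X Y S K : Prop :=
  [/\ S \subset Nbr g X,
      [forall s in S, forall y in Y, ~~ edge g s y],
      witness g X Y S K & important g X Y K].

Definition Pr g X Y K : graph V :=
  Graph (verts g :\: (NR g Y K :\: X))
        (fun u v => adj g u v || (u \in X) && (v \in K)).

Fixpoint compound_witness g X Y (Ss : seq {set V}) K : Prop :=
  match Ss with
  | [::] => False
  | S1 :: rest =>
      match rest with
      | [::] => [/\ normalized g X Y, S1 \subset Nbr g X & isKS g X Y S1 K]
      | _ :: _ =>
          normalized g X Y /\
          exists K1, [/\ isKS g X Y S1 K1,
                        [disjoint \bigcup_(S <- rest) S & Nbr g X] &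
                        compound_witness (Pr g X Y K1) X Y rest K]
      end
  end.

End Defs.

(* K(S) is unique by the usual submodularity argument for vertex cuts.  Two
   separators K1, K2 give two new separators, one taking the vertices of
   K1 :|: K2 that lie on neither non-reachable side and one taking those that
   lie on some non-reachable side, with total size at most |K1| + |K2|.  For
   two witnesses of S the second is again disjoint from S, so the first is no
   larger than K1 while cutting off at least NR(K1); importance of K1 then
   forces NR(K2) \subset NR(K1), and by symmetry both sides coincide.  Minimal
   separators with the same non-reachable side are equal, as the second
   construction then lies inside both.  A compound witness
   is then unique by induction along its attribute, since each step prunes
   the graph with the uniquely determined K(S_1). *)

From mathcomp Require Import all_boot.
Set Implicit Arguments. Unset Strict Implicit. Unset Printing Implicit Defensive.

Lemma connect_invariant (T : finType) (e : rel T) (P : pred T) x y :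
  P x -> (forall u v, P u -> e u v -> P v) -> connect e x y -> P y.
Proof.
move=> Px Pe /connectP [p + ->]; elim: p x Px => [|a p IHp] x Px //=.
by case/andP=> xa; apply: IHp; apply: Pe xa.
Qed.

Section Reachability.
Variables (V : finType) (g : graph V) (X Y : {set V}).
Implicit Types (K : {set V}) (u v w y : V).

Lemma edge_sym : symmetric (edge g).
Proof.
move=> u v; rewrite /edge; apply/and4P/and4P=> -[uV vV neq uv];
  by split; rewrite // 1?eq_sym 1?orbC.
Qed.

Lemma edge_minus_sym K : symmetric (edge_minus g K).
Proof.
by move=> u v; rewrite /edge_minus edge_sym [(u \notin K) && _]andbC.
Qed.

Lemma connect_edge_minusC K u v :
  connect (edge_minus g K) u v = connect (edge_minus g K) v u.
Proof. exact: (sym_connect_sym (edge_minus_sym K)). Qed.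

Lemma NR_sub K : NR g Y K \subset verts g :\: K.
Proof. by apply/subsetP=> v; rewrite inE => /andP []. Qed.

Lemma NR_notin K v : v \in NR g Y K -> v \notin K.
Proof. by move/(subsetP (NR_sub K)); rewrite inE => /andP []. Qed.

Lemma NR_unreachable K y v : v \in NR g Y K -> y \in Y -> y \notin K ->
  ~~ connect (edge_minus g K) y v.
Proof.
by rewrite inE => /andP [_ /existsPn /(_ y)] + yY yK; rewrite yY yK.
Qed.

Lemma edge_notin_NR K v w :
  v \notin K -> v \notin NR g Y K -> w \notin K -> edge g v w ->
  w \notin NR g Y K.
Proof.
move=> vK vNR wK evw; have /and4P [vV _ _ _] := evw.
rewrite inE !inE vK vV /= negbK in vNR.
case/existsP: vNR => y /and3P [yY yK yv].
apply/negP=> wNR; move/negP: (NR_unreachable wNR yY yK); apply.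
by apply: connect_trans yv (connect1 _); rewrite /edge_minus evw vK wK.
Qed.

Lemma Y_notin_NR K y : y \in Y -> y \notin K -> y \notin NR g Y K.
Proof.
by move=> yY yK; apply: contraTN (connect0 _ y) => /NR_unreachable; apply.
Qed.

Lemma separator_notin K v : separator g X Y K -> v \in X :|: Y -> v \notin K.
Proof. by case=> /subsetP sK _ vXY; apply/negP=> /sK; rewrite inE vXY. Qed.

Lemma separator_X_NR K :
  X \subset verts g -> separator g X Y K -> X \subset NR g Y K.
Proof.
move=> /subsetP Xg sepK; apply/subsetP=> x xX.
have xK : x \notin K by apply: separator_notin sepK _; rewrite inE xX.
rewrite inE !inE Xg //= xK /=; apply/existsPn=> y.
apply/negP=> /and3P [yY yK yx]; case: sepK => _ /negP; apply.
apply/existsP; exists x; rewrite xX; apply/existsP; exists y.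
by rewrite yY xK yK connect_edge_minusC.
Qed.

End Reachability.

Section Submodularity.
Variables (V : finType) (g : graph V) (X Y : {set V}).
Hypothesis Xg : X \subset verts g.

Local Notation NR := (NR g Y).

(* [sep_far] moves the cut away from X (its non-reachable side contains both
   NR K1 and NR K2), [sep_near] moves it towards X. *)
Definition sep_far (K1 K2 : {set V}) := (K1 :|: K2) :\: (NR K1 :|: NR K2).
Definition sep_near (K1 K2 : {set V}) :=
  (K1 :&: K2) :|: (K1 :&: NR K2) :|: (K2 :&: NR K1).

Lemma sep_farC K1 K2 : sep_far K1 K2 = sep_far K2 K1.
Proof. by rewrite /sep_far setUC [NR K1 :|: _]setUC. Qed.

Lemma sep_far_sub K1 K2 : sep_far K1 K2 \subset K1 :|: K2.
Proof. exact: subsetDl. Qed.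

Lemma sep_near_sub K1 K2 : sep_near K1 K2 \subset K1 :|: K2.
Proof.
by apply/subsetP=> v; rewrite !inE; case: (v \in K1); case: (v \in K2).
Qed.

Lemma card_sep_far_near K1 K2 :
  #|sep_far K1 K2| + #|sep_near K1 K2| <= #|K1| + #|K2|.
Proof.
rewrite -cardsUI -(cardsUI K1 K2) leq_add //; apply: subset_leq_card.
  by rewrite subUset sep_far_sub sep_near_sub.
apply/subsetP=> v; rewrite !(in_setI, in_setU, in_setD).
by case: (v \in K1); case: (v \in K2); case: (v \in NR K1); case: (v \in NR K2).
Qed.

Variables K1 K2 : {set V}.
Hypotheses (sep1 : separator g X Y K1) (sep2 : separator g X Y K2).

Lemma sub_separator_cover (K : {set V}) :
  K \subset K1 :|: K2 -> K \subset verts g :\: (X :|: Y).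
Proof.
move=> /subset_trans; apply; case: sep1 sep2 => s1 _ [s2 _].
by rewrite subUset s1 s2.
Qed.

Lemma Y_notin_separators y : y \in Y -> (y \notin K1) && (y \notin K2).
Proof.
move=> yY; have yXY : y \in X :|: Y by rewrite inE yY orbT.
by rewrite (separator_notin sep1 yXY) (separator_notin sep2 yXY).
Qed.

Lemma reach_sep_far y v : y \in Y ->
  connect (edge_minus g (sep_far K1 K2)) y v ->
  v \notin K1 :|: K2 :|: (NR K1 :|: NR K2).
Proof.
move=> yY; have /andP [y1 y2] := Y_notin_separators yY.
pose outside u := u \notin K1 :|: K2 :|: (NR K1 :|: NR K2).
apply: (@connect_invariant _ _ outside) => [|u w].
  rewrite /outside !in_setU (negbTE y1) (negbTE y2).
  by rewrite (negbTE (Y_notin_NR g yY y1)) (negbTE (Y_notin_NR g yY y2)).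
rewrite /outside !in_setU !negb_or => /andP [/andP [u1 u2] /andP [uN1 uN2]].
case/and3P=> euw _; rewrite in_setD !in_setU negb_and negbK.
have wN1 : w \notin NR K1.
  apply/negP=> wN.
  by move: (edge_notin_NR u1 uN1 (NR_notin wN) euw); rewrite wN.
have wN2 : w \notin NR K2.
  apply/negP=> wN.
  by move: (edge_notin_NR u2 uN2 (NR_notin wN) euw); rewrite wN.
by rewrite (negbTE wN1) (negbTE wN2) andbT -negb_or.
Qed.

Lemma sep_far_separator : separator g X Y (sep_far K1 K2).
Proof.
split; first exact: sub_separator_cover (sep_far_sub _ _).
apply/existsP=> [[x /andP [xX /existsP [y /andP [yY /and3P [_ _]]]]]].
rewrite connect_edge_minusC => /(reach_sep_far yY).
by rewrite !in_setU (subsetP (separator_X_NR Xg sep1) x xX) !orbT.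
Qed.

Lemma NR_sep_far : NR K1 \subset NR (sep_far K1 K2).
Proof.
apply/subsetP=> v vN1; have /setDP [vV _] := subsetP (NR_sub g Y K1) v vN1.
have v_far : v \notin sep_far K1 K2 by rewrite in_setD in_setU vN1.
rewrite inE in_setD v_far vV /=; apply/existsPn=> y.
apply/negP=> /and3P [yY _ /(reach_sep_far yY)].
by rewrite !in_setU vN1 !orbT.
Qed.

Lemma near_step u :
  u \notin sep_near K1 K2 -> u \notin NR K1 :&: NR K2 ->
  (u \notin K1) && (u \notin NR K1) || (u \notin K2) && (u \notin NR K2).
Proof.
rewrite !(in_setI, in_setU).
by case: (u \in K1); case: (u \in K2); case: (u \in NR K1); case: (u \in NR K2).
Qed.

Lemma sep_near_separator : separator g X Y (sep_near K1 K2).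
Proof.
split; first exact: sub_separator_cover (sep_near_sub _ _).
apply/existsP=> [[x /andP [xX /existsP [y /andP [yY /and3P [_ _]]]]]].
have /andP [y1 _] := Y_notin_separators yY.
rewrite connect_edge_minusC => yx.
pose outside u := u \notin NR K1 :&: NR K2.
suff: outside x.
  by rewrite /outside in_setI !(subsetP (separator_X_NR Xg _) x xX).
apply: (@connect_invariant _ _ outside _ _ _ _ yx)
  => [|u w uN /and3P [euw u_near _]].
  by rewrite /outside in_setI negb_and (Y_notin_NR g yY y1).
rewrite /outside in_setI; apply/negP=> /andP [wN1 wN2].
have [w1 w2] := (NR_notin wN1, NR_notin wN2).
case/orP: (near_step u_near uN) => /andP [uK uN'].
  by move: (edge_notin_NR uK uN' w1 euw); rewrite wN1.
by move: (edge_notin_NR uK uN' w2 euw); rewrite wN2.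
Qed.

End Submodularity.

Section UniqueImportantWitness.
Variables (V : finType) (g : graph V) (X Y S : {set V}).
Hypothesis Xg : X \subset verts g.

Lemma important_NR_maximal K K' :
  important g X Y K -> separator g X Y K' ->
  NR g Y K \subset NR g Y K' -> #|K'| <= #|K| -> NR g Y K' = NR g Y K.
Proof.
case=> _ noK' sepK' subNR leK; apply/eqP/negPn/negP => neNR.
by apply: noK'; exists K'; split=> //; split.
Qed.

Lemma minimal_separator_NR_inj K1 K2 :
  minimal_separator g X Y K1 -> minimal_separator g X Y K2 ->
  NR g Y K1 = NR g Y K2 -> K1 = K2.
Proof.
move=> min1 min2 eqNR; have [[sep1 _] [sep2 _]] := (min1, min2).
have near_sub : sep_near g Y K1 K2 \subset K1 :&: K2.
  apply/subsetP=> v; rewrite /sep_near !(in_setU, in_setI) -eqNR.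
  have [vN | _] := boolP (v \in NR g Y K1); last by rewrite !andbF !orbF.
  have v2 : v \notin K2 by rewrite eqNR in vN; apply: NR_notin vN.
  by rewrite (negbTE (NR_notin vN)) (negbTE v2).
have near_eq K : minimal_separator g X Y K ->
    sep_near g Y K1 K2 \subset K -> sep_near g Y K1 K2 = K.
  case=> _ minK subK; apply/eqP/negPn/negP => ne.
  by apply: (minK _ _ (sep_near_separator Xg sep1 sep2)); rewrite properEneq ne.
rewrite -(near_eq K1) ?(subset_trans near_sub (subsetIl _ _)) //.
by rewrite (near_eq K2) ?(subset_trans near_sub (subsetIr _ _)).
Qed.

Lemma witness_card_sep_far K1 K2 :
  witness g X Y S K1 -> witness g X Y S K2 -> #|sep_far g Y K1 K2| <= #|K1|.
Proof.
case=> sep1 dis1 min1 [sep2 dis2 min2].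
have near_dis : [disjoint sep_near g Y K1 K2 & S].
  apply: disjointWl (sep_near_sub _ _ _ _) _.
  move: dis1 dis2; rewrite -!setI_eq0 setIUl => /eqP -> /eqP ->.
  by rewrite setU0.
have le21 := min2 _ sep1 dis1.
have le1near := min1 _ (sep_near_separator Xg sep1 sep2) near_dis.
rewrite -(leq_add2r #|sep_near g Y K1 K2|).
apply: leq_trans (card_sep_far_near g Y K1 K2) _.
by rewrite addnC leq_add.
Qed.

Lemma isKS_NR_sub K1 K2 :
  isKS g X Y S K1 -> isKS g X Y S K2 -> NR g Y K2 \subset NR g Y K1.
Proof.
case=> _ _ wit1 imp1 [_ _ wit2 _].
have [[sep1 _ _] [sep2 _ _]] := (wit1, wit2).
have eqNR := important_NR_maximal imp1 (sep_far_separator Xg sep1 sep2)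
  (NR_sep_far sep1 sep2) (witness_card_sep_far wit1 wit2).
by rewrite -eqNR sep_farC (NR_sep_far sep2 sep1).
Qed.

Lemma isKS_uniq K1 K2 : isKS g X Y S K1 -> isKS g X Y S K2 -> K1 = K2.
Proof.
move=> KS1 KS2; have [[_ _ _ [min1 _]] [_ _ _ [min2 _]]] := (KS1, KS2).
apply: minimal_separator_NR_inj min1 min2 _.
by apply/eqP; rewrite eqEsubset !isKS_NR_sub.
Qed.

End UniqueImportantWitness.

Lemma Pr_verts_X (V : finType) (g : graph V) (X Y K : {set V}) :
  X \subset verts g -> X \subset verts (Pr g X Y K).
Proof. by move=> /subsetP Xg; apply/subsetP=> x xX; rewrite !inE xX Xg. Qed.

Lemma compound_witness_uniq (V : finType) (X Y : {set V}) Ss :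
  forall (g : graph V) (K K' : {set V}), X \subset verts g ->
  compound_witness g X Y Ss K -> compound_witness g X Y Ss K' -> K = K'.
Proof.
elim: Ss => [|S1 [|S2 Ss] IHSs] g K K' Xg //=.
  by case=> _ _ KS [_ _ KS']; apply: isKS_uniq KS KS'.
case=> _ [K1 [KS1 _ cw]] [_ [K1' [KS1' _ cw']]].
rewrite -(isKS_uniq Xg KS1 KS1') in cw'.
exact: IHSs (Pr_verts_X Y K1 Xg) cw cw'.
Qed.

Theorem corollary2 (V : finType) (G : graph V) (X Y : {set V}) :
  X \subset verts G -> Y \subset verts G -> [disjoint X & Y] ->
  normalized G X Y ->
  forall Ss : seq {set V},
    (forall S, S \in Ss -> S \subset verts G) ->
    (forall S, S \in Ss -> S != set0) ->
    pairwise (fun A B : {set V} => [disjoint A & B]) Ss ->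
    forall K K' : {set V},
      compound_witness G X Y Ss K -> compound_witness G X Y Ss K' -> K = K'.
Proof.
move=> XG _ _ _ Ss _ _ _ K K'; exact: compound_witness_uniq.
Qed.
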